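(* Let $(S_n)_{n\ge1}$ be a sequence in $\mathcal S$ satisfying infill asymptotics with respect to $(S^*_m)_{m=1}^M$, let $(a_t)_{t\ge1}$ be positive with $a_t\to0$, and let $(k_N)_{N\ge1}$ be the adaptive number-of-neighbors sequence. Then (1) $\lim_{N\to\infty}k_N=\infty$, and (2) $\lim_{N\to\infty}R_{N,k_N}=0$.
   Context: $(\mathcal S,d)$ is a metric space and $S^*_1,\dots,S^*_M\in\mathcal S$ are fixed target locations. Infill asymptotics: for every $m$ and every open $U\ni S^*_m$, infinitely many $n$ satisfy $S_n\in U$. For $t\le N$, $R_{N,t}=\max_{1\le m\le M}\max\{d(S^*_m,S_n):n\le N,\ S_n \text{ is among the } t \text{ nearest neighbors of } S^*_m \text{ in } \{S_1,\dots,S_N\}\}$ (ties broken uniformly at random). Adaptive sequence: $k_1=1$ and $k_{N+1}=k_N+1$ if $R_{N+1,k_N+1}\le a_{k_N}$, otherwise $k_{N+1}=k_N$. *)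

From HB Require Import structures.
From mathcomp Require Import all_boot all_order all_algebra.
From mathcomp Require Import reals.
Set Implicit Arguments. Unset Strict Implicit. Unset Printing Implicit Defensive.
Import Order.TTheory GRing.Theory Num.Theory.
Local Open Scope ring_scope.

Definition is_metric (R : realType) (T : Type) (d : T -> T -> R) : Prop :=
  (forall x y, 0 <= d x y) /\
  (forall x y, d x y = 0 <-> x = y) /\
  (forall x y, d x y = d y x) /\
  (forall x y z, d x z <= d x y + d y z).

Definition metric_open (R : realType) (T : Type) (d : T -> T -> R) (U : T -> Prop) : Prop :=
  forall x, U x -> exists2 e : R, 0 < e & forall y, d x y < e -> U y.

Definition infill (R : realType) (T : Type) (d : T -> T -> R)
  (S : nat -> T) (Sstar : nat -> T) (M : nat) : Prop :=
  forall m, (1 <= m <= M)%N -> forall U : T -> Prop, metric_open d U -> U (Sstar m) ->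
    forall n0 : nat, exists n : nat, (n0 < n)%N /\ U (S n).

(* l (a list of indices) is a valid set of t nearest neighbours of x among
   S_1, ..., S_N (for some tie-breaking): t distinct indices in [1, N], each
   at least as close to x as every index in [1, N] not chosen. *)
Definition is_nn_set (R : realType) (T : Type) (d : T -> T -> R) (x : T)
  (S : nat -> T) (N t : nat) (l : seq nat) : Prop :=
  [/\ uniq l, size l = t, all (fun i => (1 <= i <= N)%N) l &
      forall i j, i \in l -> (1 <= j <= N)%N -> j \notin l -> d x (S i) <= d x (S j)].

(* R_{N,t} given the realised nearest-neighbour sets sel m N t (the t nearest
   neighbours of S*_m among S_1..S_N, ties broken by the realisation sel). *)
Definition RNt (R : realType) (T : Type) (d : T -> T -> R)
  (S Sstar : nat -> T) (M : nat) (sel : nat -> nat -> nat -> seq nat) (N t : nat) : R :=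
  \big[Num.max/0]_(m <- iota 1 M) \big[Num.max/0]_(i <- sel m N t) d (Sstar m) (S i).

From HB Require Import structures.
From mathcomp Require Import all_boot all_order all_algebra.
From mathcomp Require Import reals.
From mathcomp Require Import lra.
Set Implicit Arguments. Unset Strict Implicit. Unset Printing Implicit Defensive.
Import Order.TTheory GRing.Theory Num.Theory.
Local Open Scope ring_scope.

(* For a fixed t, R_{N,t} is nonincreasing in N, and it tends to 0 because infill
   asymptotics eventually supplies t sample points inside any ball around each
   target.  Hence k_N cannot stay at a value K forever: R_{N+1,K+1} would drop
   below a_K > 0 and the rule would increment k.  Moreover, once k_N >= 2 the
   last increment of k certified R <= a_{k_N - 1}, and monotonicity in N keeps
   this bound until the next increment; so R_{N,k_N} <= a_{k_N - 1} -> 0. *)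

Definition eventually (P : nat -> Prop) : Prop :=
  exists N0, forall N, (N0 <= N)%N -> P N.

Lemma eventually_forall_ltn (P : nat -> nat -> Prop) n :
  (forall m, (m < n)%N -> eventually (P m)) ->
  eventually (fun N => forall m, (m < n)%N -> P m N).
Proof.
elim: n => [|n IH] evP; first by exists 0%N.
have [N1 P1] := IH (fun m lt_mn => evP m (ltnW lt_mn)).
have [N2 P2] := evP n (ltnSn n).
exists (maxn N1 N2) => N; rewrite geq_max => /andP[N1N N2N] m.
by rewrite ltnS leq_eqVlt => /predU1P[->|lt_mn]; [exact: P2 | exact: P1].
Qed.

Lemma metric_open_ball (R : realType) (T : Type) (d : T -> T -> R) x r :
  is_metric d -> metric_open d (fun y => d x y < r).
Proof.
move=> [_ [_ [_ d_tri]]] y dxy; exists (r - d x y); first by rewrite subr_gt0.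
by move=> z dyz; have := d_tri x y z; lra.
Qed.

Section NearestNeighbours.
Variables (R : realType) (T : Type) (d : T -> T -> R) (S : nat -> T).

(* Either l' is l up to order, or l' contains an index outside l, which is at
   least as far from x as every member of l. *)
Lemma is_nn_set_dominated x N t l l' :
  is_nn_set d x S N t l -> uniq l' -> size l' = t ->
  all (fun j => (1 <= j <= N)%N) l' ->
  forall i, i \in l -> exists2 j, j \in l' & d x (S i) <= d x (S j).
Proof.
case=> uniq_l size_l _ nn uniq_l' size_l' range_l' i il.
have [/allP sub|/allPn[j jl' jNl]] := boolP (all (mem l) l').
  have [_ eq_l] := uniq_min_size uniq_l' sub (eq_leq (etrans size_l (esym size_l'))).
  by exists i; rewrite ?eq_l.
by exists j => //; apply: nn => //; exact: (allP range_l').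
Qed.

Variables (Sstar : nat -> T) (M : nat) (sel : nat -> nat -> nat -> seq nat).

Local Notation rho := (RNt d S Sstar M sel).

Lemma RNt_ge N t m i :
  (1 <= m <= M)%N -> i \in sel m N t -> d (Sstar m) (S i) <= rho N t.
Proof.
move=> m_range isel; rewrite /RNt.
apply: le_trans (le_bigmax_seq _ _ _ (fun i => d (Sstar m) (S i)) isel isT) _.
apply: (le_bigmax_seq _ m xpredT
  (fun m => \big[Num.max/0]_(i <- sel m N t) d (Sstar m) (S i))) => //.
by rewrite mem_iota add1n ltnS.
Qed.

Lemma RNt_le N t r : 0 <= r ->
  (forall m i, (1 <= m <= M)%N -> i \in sel m N t -> d (Sstar m) (S i) <= r) ->
  rho N t <= r.
Proof.
move=> r_ge0 dle; rewrite /RNt big_seq; apply: bigmax_le => // m.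
rewrite mem_iota add1n ltnS => m_range.
by rewrite big_seq; apply: bigmax_le => // i; exact: dle.
Qed.

Lemma RNt_lt N t r : 0 < r ->
  (forall m i, (1 <= m <= M)%N -> i \in sel m N t -> d (Sstar m) (S i) < r) ->
  rho N t < r.
Proof.
move=> r_gt0 dlt; rewrite /RNt big_seq; apply: bigmax_lt => // m.
rewrite mem_iota add1n ltnS => m_range.
by rewrite big_seq; apply: bigmax_lt => // i; exact: dlt.
Qed.

Hypothesis sel_nn : forall m N t, (1 <= m <= M)%N -> (1 <= t <= N)%N ->
  is_nn_set d (Sstar m) S N t (sel m N t).

Lemma RNt_nonincreasing t N N' :
  (1 <= t <= N)%N -> (N <= N')%N -> rho N' t <= rho N t.
Proof.
move=> /andP[t_gt0 tN] NN'; apply: RNt_le => [|m i m_range isel].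
  exact: bigmax_ge_id.
have [uniq_l size_l range_l _] := sel_nn m_range (introT andP (conj t_gt0 tN)).
have range_l' : all (fun j => (1 <= j <= N')%N) (sel m N t).
  by apply/allP => j /(allP range_l) /andP[-> jN]; exact: leq_trans jN NN'.
have tN' : (1 <= t <= N')%N by rewrite t_gt0 (leq_trans tN NN').
have [j jsel dij] := is_nn_set_dominated (sel_nn m_range tN') uniq_l size_l range_l' isel.
exact: le_trans dij (RNt_ge m_range jsel).
Qed.

Hypotheses (d_metric : is_metric d) (S_infill : infill d S Sstar M).

Lemma infill_near_indices m r t : (1 <= m <= M)%N -> 0 < r ->
  exists B l, [/\ uniq l, size l = t, all (fun i => (1 <= i <= B)%N) l &
                  forall i, i \in l -> d (Sstar m) (S i) < r].
Proof.
move=> m_range r_gt0; elim: t => [|t [B [l [uniq_l size_l range_l near_l]]]].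
  by exists 0%N, [::].
have center : d (Sstar m) (Sstar m) < r.
  by case: d_metric => _ [d_eq0 _]; rewrite (proj2 (d_eq0 _ _) erefl).
have [n [Bn near_n]] := S_infill m_range (metric_open_ball d_metric) center B.
have range_l' : all (fun i => (1 <= i <= n)%N) l.
  by apply/allP => i /(allP range_l) /andP[-> iB]; exact: leq_trans iB (ltnW Bn).
exists n, (n :: l); split => /=.
- rewrite uniq_l andbT; apply/negP => /(allP range_l) /andP[_ nB].
  by have := leq_trans Bn nB; rewrite ltnn.
- by rewrite size_l.
- by rewrite leqnn (leq_trans _ Bn).
- by move=> i; rewrite inE => /predU1P[->|/near_l].
Qed.

Lemma RNt_vanishes t r : (1 <= t)%N -> 0 < r ->
  eventually (fun N => (t <= N)%N -> rho N t < r).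
Proof.
move=> t_gt0 r_gt0.
have near_m : forall m, (m < M.+1)%N -> eventually (fun N => (t <= N)%N ->
    (1 <= m <= M)%N -> forall i, i \in sel m N t -> d (Sstar m) (S i) < r).
  move=> m _; have [m_range|] := boolP (1 <= m <= M)%N; last first.
    by exists 0%N => N _ _ /negP.
  have [B [l [uniq_l size_l range_l near_l]]] := infill_near_indices t m_range r_gt0.
  exists B => N BN tN _ i isel.
  have range_l' : all (fun j => (1 <= j <= N)%N) l.
    by apply/allP => j /(allP range_l) /andP[-> jB]; exact: leq_trans jB BN.
  have [j jl dij] := is_nn_set_dominated (sel_nn m_range (introT andP (conj t_gt0 tN)))
    uniq_l size_l range_l' isel.
  exact: le_lt_trans dij (near_l j jl).
have [N0 near] := eventually_forall_ltn near_m.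
exists N0 => N N0N tN; apply: RNt_lt => // m i m_range.
by apply: near => //; rewrite ltnS; case/andP: m_range.
Qed.

End NearestNeighbours.

Section AdaptiveNeighbours.
Variables (R : realType) (rho : nat -> nat -> R) (a : nat -> R) (k : nat -> nat).

Hypothesis k1 : k 1%N = 1%N.
Hypothesis k_step : forall N, (1 <= N)%N ->
  k N.+1 = if rho N.+1 (k N).+1 <= a (k N) then (k N).+1 else k N.

Lemma k_bounds N : (1 <= N)%N -> (1 <= k N <= N)%N.
Proof.
elim: N => // -[_ _|N IH _]; first by rewrite k1.
have /andP[k_gt0 kN] := IH isT.
by rewrite k_step //; case: ifP => _; rewrite ?k_gt0 ?kN ?(leq_trans kN).
Qed.

Lemma k_nondecreasing N N' : (1 <= N)%N -> (N <= N')%N -> (k N <= k N')%N.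
Proof.
move=> N_gt0; elim: N' => [|N' IH]; first by rewrite leqn0 => /eqP->.
rewrite leq_eqVlt ltnS => /predU1P[->//|NN'].
rewrite k_step ?(leq_trans N_gt0 NN') //.
by case: ifP => _; rewrite ?(leq_trans (IH NN')).
Qed.

Hypothesis a_pos : forall t, (1 <= t)%N -> 0 < a t.
Hypothesis rho_vanishes : forall t r, (1 <= t)%N -> 0 < r ->
  eventually (fun N => (t <= N)%N -> rho N t < r).

Lemma k_unbounded K : eventually (fun N => (K <= k N)%N).
Proof.
elim: K => [|K [N0 K_le_k]]; first by exists 0%N.
have [->|K_gt0] := posnP K.
  by exists 1%N => N /k_bounds /andP[].
have [N1 rho_small] := rho_vanishes (ltn0Sn K) (a_pos K_gt0).
set N := maxn (maxn N0 N1) 1.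
have [N0N N1N N_gt0] : [/\ (N0 <= N)%N, (N1 <= N)%N & (1 <= N)%N].
  by split; rewrite !leq_max ?leqnn ?orbT.
suff K_lt_k : (K < k N.+1)%N.
  by exists N.+1 => N' NN'; exact: leq_trans K_lt_k (k_nondecreasing _ NN').
have := K_le_k N N0N; rewrite leq_eqVlt => /predU1P[kN|K_lt_kN]; last first.
  exact: leq_trans K_lt_kN (k_nondecreasing N_gt0 (leqnSn N)).
have K_le_N : (K <= N)%N by rewrite kN; case/andP: (k_bounds N_gt0).
have rho_below_a : rho N.+1 K.+1 <= a K.
  by apply/ltW/rho_small; rewrite ?(leq_trans N1N).
by rewrite k_step // -kN rho_below_a.
Qed.

Hypothesis rho_nonincreasing : forall t N N', (1 <= t <= N)%N -> (N <= N')%N ->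
  rho N' t <= rho N t.

Lemma rho_k_le_a_pred N : (1 <= N)%N -> (2 <= k N)%N -> rho N (k N) <= a (k N).-1.
Proof.
elim: N => // -[_ _|N IH _]; first by rewrite k1.
rewrite k_step //; case: ifP => [//|_ k_ge2].
apply: le_trans (IH isT k_ge2); apply: rho_nonincreasing => //.
by rewrite (leq_trans _ k_ge2) //; case/andP: (k_bounds (ltn0Sn N)).
Qed.

Hypothesis a_vanishes : forall e, 0 < e -> exists t0 : nat, forall t, (t0 <= t)%N -> a t < e.

Lemma rho_k_vanishes e : 0 < e -> eventually (fun N => rho N (k N) < e).
Proof.
move=> e_gt0; have [t0 a_small] := a_vanishes e_gt0.
have [N0 k_large] := k_unbounded t0.+2.
exists (maxn N0 1) => N; rewrite geq_max => /andP[N0N N_gt0].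
have k_ge := k_large N N0N.
apply: le_lt_trans (rho_k_le_a_pred N_gt0 (leq_trans _ k_ge)) (a_small _ _) => //.
by rewrite -ltnS prednK // (leq_trans _ k_ge).
Qed.

End AdaptiveNeighbours.

Theorem propositionD2 (R : realType) (T : Type) (d : T -> T -> R)
  (M : nat) (Sstar S : nat -> T) (a : nat -> R) (k : nat -> nat)
  (sel : nat -> nat -> nat -> seq nat) :
  is_metric d ->
  infill d S Sstar M ->
  (forall t, (1 <= t)%N -> 0 < a t) ->
  (forall e : R, 0 < e -> exists t0 : nat, forall t, (t0 <= t)%N -> a t < e) ->
  (forall m N t, (1 <= m <= M)%N -> (1 <= t <= N)%N ->
     is_nn_set d (Sstar m) S N t (sel m N t)) ->
  k 1%N = 1%N ->
  (forall N, (1 <= N)%N ->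
     k N.+1 = if RNt d S Sstar M sel N.+1 (k N).+1 <= a (k N) then (k N).+1 else k N) ->
  (forall K : nat, exists N0 : nat, forall N, (N0 <= N)%N -> (K <= k N)%N) /\
  (forall e : R, 0 < e -> exists N0 : nat, forall N, (N0 <= N)%N ->
     RNt d S Sstar M sel N (k N) < e).
Proof.
move=> d_metric S_infill a_pos a_vanishes sel_nn k1 k_step.
have rho_vanishes := RNt_vanishes sel_nn d_metric S_infill.
have rho_nonincreasing := RNt_nonincreasing sel_nn.
split.
- exact: k_unbounded k1 k_step a_pos rho_vanishes.
- exact: rho_k_vanishes k1 k_step a_pos rho_vanishes rho_nonincreasing a_vanishes.
Qed.
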